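(* The operator $J$ with domain $\mathcal F(\Gamma)$, viewed as a symmetric operator in $\ell^2(\Gamma)$, has defect indices not greater than $1$; i.e. for every nonreal $z$, the space of $v\in\ell^2(\Gamma)$ with $Jv=zv$ has dimension at most $1$.
   Context: Let $\Gamma$ be an infinite connected tree whose vertices are arranged in levels $\ell(x)\in\{0,1,2,\dots\}$: every vertex $x$ is adjacent to exactly one vertex $x'$ with $\ell(x')=\ell(x)+1$; for $\ell(x)\ge 1$ the set $N_x=\{y:\ y'=x\}$ of neighbours of $x$ on level $\ell(x)-1$ is finite and nonempty; $N_x=\emptyset$ if $\ell(x)=0$; there are no other edges. Fix $\lambda_x>0$, $\beta_x\in\mathbb R$ for $x\in\Gamma$. The Jacobi matrix $J$ acts on functions $v:\Gamma\to\mathbb C$ by $(Jv)(x)=\lambda_x v(x')+\beta_x v(x)+\sum_{y\in N_x}\lambda_y v(y)$. $\mathcal F(\Gamma)$ denotes the finitely supported functions on $\Gamma$; $\ell^2(\Gamma)$ has inner product $(u,v)=\sum_{x}u(x)\overline{v(x)}$, and $J$ with domain $\mathcal F(\Gamma)$ is a symmetric operator in $\ell^2(\Gamma)$. *)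

From Stdlib Require Import Reals List.
Import ListNotations.
Open Scope R_scope.

Record Cx : Type := mkC { re : R; im : R }.
Definition C0 : Cx := mkC 0 0.
Definition RtoC (r : R) : Cx := mkC r 0.
Definition Cadd (a b : Cx) : Cx := mkC (re a + re b) (im a + im b).
Definition Cmul (a b : Cx) : Cx :=
  mkC (re a * re b - im a * im b) (re a * im b + im a * re b).
Definition Cnorm2 (a : Cx) : R := re a * re a + im a * im a.
Definition Csum (l : list Cx) : Cx := fold_right Cadd C0 l.

(* A leveled tree Gamma: vertex type V, level function, the unique upper
   neighbour x' = parent x, and the finite list ch x enumerating N_x. *)
Record LevelTree (V : Type) : Type := {
  level : V -> nat;
  parent : V -> V;
  ch : V -> list V;
  level_parent : forall x, level (parent x) = S (level x);
  ch_NoDup : forall x, NoDup (ch x);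
  ch_spec : forall x y, In y (ch x) <-> parent y = x;
  ch_nonempty : forall x, (1 <= level x)%nat -> ch x <> [];
  ch_level0 : forall x, level x = 0%nat -> ch x = [];
  connected : forall x y : V, exists n m : nat,
      Nat.iter n parent x = Nat.iter m parent y;
  infinite : forall l : list V, exists x : V, ~ In x l
}.
Arguments level {V} _ _.
Arguments parent {V} _ _.
Arguments ch {V} _ _.

(* v belongs to l^2(Gamma): sum_x |v x|^2 < infinity, i.e. the finite partial
   sums over sets of distinct vertices are uniformly bounded. *)
Definition in_l2 {V : Type} (v : V -> Cx) : Prop :=
  exists M : R, forall l : list V, NoDup l ->
    fold_right Rplus 0 (map (fun x => Cnorm2 (v x)) l) <= M.

Definition Jac {V : Type} (G : LevelTree V) (lam beta : V -> R) (v : V -> Cx)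
  (x : V) : Cx :=
  Cadd (Cadd (Cmul (RtoC (lam x)) (v (parent G x)))
             (Cmul (RtoC (beta x)) (v x)))
       (Csum (map (fun y => Cmul (RtoC (lam y)) (v y)) (ch G x))).

Definition defect_space {V : Type} (G : LevelTree V) (lam beta : V -> R)
  (z : Cx) (v : V -> Cx) : Prop :=
  in_l2 v /\ forall x, Jac G lam beta v x = Cmul z (v x).

(* For nonreal z, a solution w of J w = z w that vanishes at one vertex vanishes
   everywhere; since any two vectors u, v admit a nontrivial combination a u + b v
   vanishing at a fixed vertex, this gives dim { v : J v = z v } <= 1.
   The key is a Green identity on the finite subtree T_x below x: writing
   S(x) = sum_{y in T_x} |w y|^2, one has Im z * S(x) = lam_x * Im (w(x') conj (w x)).
   Hence w x = 0 forces w = 0 on T_x, and then the equation at x gives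
   lam_x w(x') = 0, i.e. w(x') = 0.  Climbing to a common ancestor of any vertex
   and then descending finishes the argument. *)
From Stdlib Require Import Reals List Lra Psatz Classical.
Open Scope R_scope.

Definition sumR {A : Type} (f : A -> R) (l : list A) : R :=
  fold_right (fun y acc => f y + acc) 0 l.

Lemma sumR_ext {A : Type} (f g : A -> R) (l : list A) :
  (forall y, In y l -> f y = g y) -> sumR f l = sumR g l.
Proof.
  induction l as [|a l IH]; intros H; simpl; [reflexivity|].
  rewrite (H a (or_introl eq_refl)), IH; [reflexivity|].
  intros y Hy; apply H; right; exact Hy.
Qed.

Lemma sumR_eq0 {A : Type} (f : A -> R) (l : list A) :
  (forall y, In y l -> f y = 0) -> sumR f l = 0.
Proof.
  intros H; rewrite (sumR_ext f (fun _ => 0)) by exact H; clear H.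
  induction l; simpl; [reflexivity|]; rewrite IHl; ring.
Qed.

Lemma sumR_ge0 {A : Type} (f : A -> R) (l : list A) :
  (forall y, 0 <= f y) -> 0 <= sumR f l.
Proof. intros H; induction l as [|a l IH]; simpl; [lra|]; specialize (H a); lra. Qed.

Lemma sumR_ge_term {A : Type} (f : A -> R) (l : list A) (c : A) :
  (forall y, 0 <= f y) -> In c l -> f c <= sumR f l.
Proof.
  intros H; induction l as [|a l IH]; simpl; intros Hc; [contradiction|].
  pose proof (sumR_ge0 f l H); pose proof (H a).
  destruct Hc as [<-|Hc]; [lra|]; specialize (IH Hc); lra.
Qed.

Lemma sumR_lin {A : Type} (f g : A -> R) (l : list A) (a b : R) :
  sumR (fun y => a * f y + b * g y) l = a * sumR f l + b * sumR g l.
Proof. induction l; simpl; [ring|]; rewrite IHl; ring. Qed.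

Lemma sumR_scal {A : Type} (f : A -> R) (l : list A) (a : R) :
  sumR (fun y => a * f y) l = a * sumR f l.
Proof. induction l; simpl; [ring|]; rewrite IHl; ring. Qed.

Lemma Cx_ext (a b : Cx) : re a = re b -> im a = im b -> a = b.
Proof. destruct a, b; simpl; intros -> ->; reflexivity. Qed.

Lemma Cnorm2_ge0 (a : Cx) : 0 <= Cnorm2 a.
Proof. unfold Cnorm2; nra. Qed.

Lemma Cnorm2_eq0 (a : Cx) : Cnorm2 a = 0 -> a = C0.
Proof. unfold Cnorm2; intros H; apply Cx_ext; simpl; nra. Qed.

Lemma re_Csum_map {A : Type} (f : A -> Cx) (l : list A) :
  re (Csum (map f l)) = sumR (fun y => re (f y)) l.
Proof. induction l; simpl; [reflexivity|]; rewrite IHl; reflexivity. Qed.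

Lemma im_Csum_map {A : Type} (f : A -> Cx) (l : list A) :
  im (Csum (map f l)) = sumR (fun y => im (f y)) l.
Proof. induction l; simpl; [reflexivity|]; rewrite IHl; reflexivity. Qed.

Lemma Csum_map_lincomb {A : Type} (a b : Cx) (f g : A -> Cx) (l : list A) :
  Csum (map (fun y => Cadd (Cmul a (f y)) (Cmul b (g y))) l) =
  Cadd (Cmul a (Csum (map f l))) (Cmul b (Csum (map g l))).
Proof.
  induction l; simpl; rewrite ?IHl; apply Cx_ext; simpl; ring.
Qed.

(* [imc p q] is Im (p * conj q). *)
Definition imc (p q : Cx) : R := im p * re q - re p * im q.

Lemma Cx_dependent_pair (p q : Cx) :
  exists a b : Cx, (a <> C0 \/ b <> C0) /\ Cadd (Cmul a p) (Cmul b q) = C0.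
Proof.
  destruct (classic (p = C0 /\ q = C0)) as [[-> ->]|Hpq].
  - exists (mkC 1 0), C0; split.
    + left; intros E; injection E; lra.
    + apply Cx_ext; simpl; ring.
  - exists q, (mkC (- re p) (- im p)); split.
    + apply not_and_or in Hpq; destruct Hpq as [Hp|Hq]; [right|left; exact Hq].
      intros E; injection E as E1 E2; apply Hp, Cx_ext; simpl; lra.
    + apply Cx_ext; simpl; ring.
Qed.

Section Eigenfunctions.

Variables (V : Type) (G : LevelTree V) (lam beta : V -> R).

Lemma Jac_lincomb (a b : Cx) (u v : V -> Cx) (x : V) :
  Jac G lam beta (fun y => Cadd (Cmul a (u y)) (Cmul b (v y))) x =
  Cadd (Cmul a (Jac G lam beta u x)) (Cmul b (Jac G lam beta v x)).
Proof.
  unfold Jac.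
  rewrite (map_ext _
    (fun y => Cadd (Cmul a (Cmul (RtoC (lam y)) (u y)))
                   (Cmul b (Cmul (RtoC (lam y)) (v y))))).
  - rewrite Csum_map_lincomb; apply Cx_ext; simpl; ring.
  - intros y; apply Cx_ext; simpl; ring.
Qed.

Lemma child_level (x y : V) : In y (ch G x) -> level G x = S (level G y).
Proof. intros Hy; apply (ch_spec V G) in Hy; subst x; apply level_parent. Qed.

(* Squared mass of [w] on the subtree below [x]; the fuel [level G x] is exactly
   the height of that subtree. *)
Fixpoint mass_below (w : V -> Cx) (n : nat) (x : V) : R :=
  match n with
  | O => Cnorm2 (w x)
  | S k => Cnorm2 (w x) + sumR (mass_below w k) (ch G x)
  end.

Definition subtree_mass (w : V -> Cx) (x : V) : R := mass_below w (level G x) x.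

Lemma mass_below_ge0 (w : V -> Cx) (n : nat) (x : V) : 0 <= mass_below w n x.
Proof.
  revert x; induction n as [|n IH]; intros x; simpl.
  - apply Cnorm2_ge0.
  - pose proof (Cnorm2_ge0 (w x)); pose proof (sumR_ge0 _ (ch G x) IH); lra.
Qed.

Lemma subtree_mass_ge0 (w : V -> Cx) (x : V) : 0 <= subtree_mass w x.
Proof. apply mass_below_ge0. Qed.

Lemma subtree_mass_unfold (w : V -> Cx) (x : V) :
  subtree_mass w x = Cnorm2 (w x) + sumR (subtree_mass w) (ch G x).
Proof.
  unfold subtree_mass; destruct (level G x) as [|n] eqn:Ex; simpl.
  - rewrite (ch_level0 V G x Ex); simpl; ring.
  - f_equal; apply sumR_ext; intros y Hy.
    rewrite (child_level x y Hy) in Ex; injection Ex as ->; reflexivity.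
Qed.

Lemma subtree_mass_eq0_point (w : V -> Cx) (x : V) :
  subtree_mass w x = 0 -> w x = C0.
Proof.
  rewrite subtree_mass_unfold; intros H.
  pose proof (sumR_ge0 _ (ch G x) (subtree_mass_ge0 w)).
  pose proof (Cnorm2_ge0 (w x)).
  apply Cnorm2_eq0; lra.
Qed.

Lemma subtree_mass_eq0_child (w : V -> Cx) (c : V) :
  subtree_mass w (parent G c) = 0 -> subtree_mass w c = 0.
Proof.
  rewrite subtree_mass_unfold; intros H.
  assert (Hc : In c (ch G (parent G c))) by (apply (ch_spec V G); reflexivity).
  pose proof (sumR_ge_term _ _ c (subtree_mass_ge0 w) Hc).
  pose proof (Cnorm2_ge0 (w (parent G c))); pose proof (subtree_mass_ge0 w c).
  lra.
Qed.

Lemma subtree_mass_eq0_iter (w : V -> Cx) (n : nat) (y : V) :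
  subtree_mass w (Nat.iter n (parent G) y) = 0 -> subtree_mass w y = 0.
Proof.
  revert y; induction n as [|n IH]; intros y H; [exact H|].
  apply IH, subtree_mass_eq0_child; exact H.
Qed.

Variables (z : Cx) (w : V -> Cx).
Hypothesis hz : im z <> 0.
Hypothesis eigen : forall x, Jac G lam beta w x = Cmul z (w x).

(* Imaginary part of [conj (w x) * (J w)(x) = z |w x|^2]. *)
Lemma eigen_imc (x : V) :
  im z * Cnorm2 (w x) =
  lam x * imc (w (parent G x)) (w x) + sumR (fun y => lam y * imc (w y) (w x)) (ch G x).
Proof.
  pose proof (eigen x) as E; unfold Jac in E.
  pose proof (f_equal re E) as Ere; pose proof (f_equal im E) as Eim.
  simpl in Ere, Eim; rewrite re_Csum_map in Ere; rewrite im_Csum_map in Eim.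
  simpl in Ere, Eim.
  rewrite (sumR_ext _ (fun y => re (w x) * (lam y * im (w y) + 0 * re (w y))
                                + - im (w x) * (lam y * re (w y) - 0 * im (w y))))
    by (intros y _; unfold imc; ring).
  rewrite sumR_lin; unfold imc, Cnorm2; nra.
Qed.

Lemma subtree_green (x : V) :
  im z * subtree_mass w x = lam x * imc (w (parent G x)) (w x).
Proof.
  remember (level G x) as n eqn:Hn; revert x Hn.
  induction n as [|n IH]; intros x Hn.
  - rewrite subtree_mass_unfold, Rmult_plus_distr_l, eigen_imc,
      (ch_level0 V G x (eq_sym Hn)); simpl; ring.
  - rewrite subtree_mass_unfold, Rmult_plus_distr_l, eigen_imc.
    rewrite (sumR_ext (subtree_mass w)
               (fun y => (- / im z) * (lam y * imc (w y) (w x)))).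
    + rewrite sumR_scal; field; exact hz.
    + intros y Hy.
      assert (Hy' := Hy); apply (ch_spec V G) in Hy'.
      apply (Rmult_eq_reg_l (im z)); [|exact hz].
      rewrite IH, Hy'.
      * unfold imc; field; exact hz.
      * rewrite (child_level x y Hy) in Hn; injection Hn as ->; reflexivity.
Qed.

Lemma eigen_eq0_subtree (x : V) : w x = C0 -> subtree_mass w x = 0.
Proof.
  intros Hx; apply (Rmult_eq_reg_l (im z)); [|exact hz].
  rewrite subtree_green, Hx; unfold imc; simpl; ring.
Qed.

Hypothesis hlam : forall x, 0 < lam x.

Lemma eigen_eq0_parent (x : V) : w x = C0 -> w (parent G x) = C0.
Proof.
  intros Hx.
  assert (Hch : forall y, In y (ch G x) -> w y = C0).
  { intros y Hy; apply subtree_mass_eq0_point, subtree_mass_eq0_child.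
    apply (ch_spec V G) in Hy; rewrite Hy; apply eigen_eq0_subtree; exact Hx. }
  pose proof (eigen x) as E; unfold Jac in E; rewrite Hx in E.
  pose proof (f_equal re E) as Ere; pose proof (f_equal im E) as Eim.
  simpl in Ere, Eim; rewrite re_Csum_map in Ere; rewrite im_Csum_map in Eim.
  rewrite sumR_eq0 in Ere, Eim by (intros y Hy; rewrite (Hch y Hy); simpl; ring).
  pose proof (hlam x).
  apply Cx_ext; simpl; apply (Rmult_eq_reg_l (lam x)); lra.
Qed.

Lemma eigen_eq0_everywhere (x0 : V) : w x0 = C0 -> forall y, w y = C0.
Proof.
  intros H0 y.
  assert (Hup : forall m, w (Nat.iter m (parent G) x0) = C0).
  { induction m as [|m IH]; [exact H0|]; apply eigen_eq0_parent, IH. }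
  destruct (connected V G y x0) as [n [m Hnm]].
  apply subtree_mass_eq0_point, (subtree_mass_eq0_iter w n).
  rewrite Hnm; apply eigen_eq0_subtree, Hup.
Qed.

End Eigenfunctions.

Theorem proposition2 (V : Type) (G : LevelTree V) (lam beta : V -> R)
  (hlam : forall x, 0 < lam x) (z : Cx) (hz : im z <> 0)
  (u v : V -> Cx) (hu : defect_space G lam beta z u)
  (hv : defect_space G lam beta z v) :
  exists a b : Cx, (a <> C0 \/ b <> C0) /\
    forall x, Cadd (Cmul a (u x)) (Cmul b (v x)) = C0.
Proof.
  destruct hu as [_ hu], hv as [_ hv].
  destruct (infinite V G nil) as [x0 _].
  destruct (Cx_dependent_pair (u x0) (v x0)) as [a [b [Hab H0]]].
  exists a, b; split; [exact Hab|].
  set (w := fun x => Cadd (Cmul a (u x)) (Cmul b (v x))).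
  assert (hw : forall x, Jac G lam beta w x = Cmul z (w x)).
  { intros x; unfold w; rewrite Jac_lincomb, hu, hv; apply Cx_ext; simpl; ring. }
  exact (eigen_eq0_everywhere V G lam beta z w hz hw hlam x0 H0).
Qed.
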